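(* Let $R$ be a $*$-reducing ring, let $p,q\in R$ be projections, and put $\overline{p}=1-p$, $\overline{q}=1-q$. Suppose that at least one of the following elements is MP invertible: $1-pq$, $1-pqp$, $p-pqp$, $p-pq$, $p-qp$, $1-qp$, $1-qpq$, $q-qpq$, $q-qp$, $q-pq$, $p+q-pq$, $p+\overline{p}q\overline{p}$, $\overline{p}q\overline{p}$, $p+q-qp$, $q+\overline{q}p\overline{q}$, $\overline{q}p\overline{q}$, $p(1-q)$, $p-q$, $(1-p)q$. (Then all of them are MP invertible.) Then (1) $(1-pq)^{\dagger}p\overline{q}p = p\overline{q}(p\overline{q}p)^{\dagger} = p\overline{q}p(1-qp)^{\dagger} = p(p\overline{q})^{\dagger} = (\overline{q}p)^{\dagger}p = p(p-q)^{\dagger}p$; (2) $(p+\overline{p}q)^{\dagger}\overline{p}q\overline{p} = (q+p\overline{q})^{\dagger}\overline{p}q\overline{p} = \overline{p}q(\overline{p}q\overline{p})^{\dagger} = \overline{p}q\overline{p}(p+q\overline{p})^{\dagger} = \overline{p}q\overline{p}(q+\overline{q}p)^{\dagger} = \overline{p}(\overline{p}q)^{\dagger} = (q\overline{p})^{\dagger}\overline{p} = \overline{p}(q-p)^{\dagger}\overline{p}$.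
   Context: $R$ is an associative ring with identity $1$ and an involution $a\mapsto a^*$ (satisfying $(a^* )^*=a$, $(a+b)^*=a^*+b^*$, $(ab)^*=b^*a^*$). $R$ is $*$-reducing if $a^*a=0$ implies $a=0$ for all $a\in R$. An element $a$ is MP invertible if there is $b$ with $aba=a$, $bab=b$, $(ab)^*=ab$, $(ba)^*=ba$; this $b$ is unique and written $a^{\dagger}$. A projection is an element $p$ with $p^2=p=p^*$. *)

From HB Require Import structures.
From mathcomp Require Import all_boot all_algebra.
From Stdlib Require Import ClassicalEpsilon.
Set Implicit Arguments. Unset Strict Implicit. Unset Printing Implicit Defensive.
Import GRing.Theory.
Local Open Scope ring_scope.

Definition is_involution (R : pzRingType) (star : R -> R) : Prop :=
  [/\ forall a, star (star a) = a,
      forall a b, star (a + b) = star a + star b &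
      forall a b, star (a * b) = star b * star a].

Definition star_reducing (R : pzRingType) (star : R -> R) : Prop :=
  forall a, star a * a = 0 -> a = 0.

Definition projection (R : pzRingType) (star : R -> R) (p : R) : Prop :=
  p * p = p /\ star p = p.

Definition is_MP (R : pzRingType) (star : R -> R) (a b : R) : Prop :=
  [/\ a * b * a = a, b * a * b = b,
      star (a * b) = a * b & star (b * a) = b * a].

Definition MP_invertible (R : pzRingType) (star : R -> R) (a : R) : Prop :=
  exists b, is_MP star a b.

(* a^dagger : the (unique) MP inverse of a when it exists (chosen by
   classical description; an unspecified value otherwise). *)
Definition mpinv (R : pzRingType) (star : R -> R) (a : R) : R :=
  epsilon (inhabits (0 : R)) (fun b => is_MP star a b).

(* Put k = p + q - pq - qp = (p - q)^2: it is self-adjoint and commutes with p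
   and q. The symmetries p <-> q and (p, q) |-> (1 - p, 1 - q) fix k and reduce
   the nineteen elements to seven, each of whose MP invertibility forces that of
   the corner p k = p - pqp, via a^+ = a^* c^+ for c = a a^* in a *-reducing
   ring. The other corner (1 - p) k = (1 - p) q (1 - p) is intertwined with p k
   by (1 - p) q p, so it is MP invertible too, and k^+ is the sum of the two
   corner inverses. Once u = k^+ is known to commute with p and q, every inverse
   in the statement is an explicit noncommutative polynomial in p, q and u, e.g.
   (p - q)^+ = (p - q) u and (1 - pq)^+ = 1 - pq + pq (u + k u), so (1) becomes
   a list of polynomial identities, and (2) is (1) for the pair (1 - p, 1 - q). *)

From HB Require Import structures.
From mathcomp Require Import all_boot all_algebra.
From Stdlib Require Import ClassicalEpsilon.
Set Implicit Arguments. Unset Strict Implicit. Unset Printing Implicit Defensive.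
Import GRing.Theory.
Local Open Scope ring_scope.

(** * Identities between idempotents and commuting elements *)

Inductive letter := Idem of nat | Cent of nat | Free of nat.

Definition letter_code (a : letter) : nat * nat :=
  match a with Idem i => (0, i) | Cent i => (1, i) | Free i => (2, i) end.

Definition letter_decode (c : nat * nat) : letter :=
  match c with (0, i) => Idem i | (1, i) => Cent i | (_, i) => Free i end.

Lemma letter_codeK : cancel letter_code letter_decode.
Proof. by case. Qed.

HB.instance Definition _ := Equality.copy letter (can_type letter_codeK).

Inductive term :=
  | Atom of letter | Zero | One | Add of term & term | Opp of term | Mul of term & term.

Definition is_idem (a : letter) : bool := if a is Idem _ then true else false.
Definition is_cent (a : letter) : bool := if a is Cent _ then true else false.

Definition word := seq letter.

Fixpoint expand (t : term) : seq word * seq word :=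
  match t with
  | Atom a => ([:: [:: a]], [::])
  | Zero => ([::], [::])
  | One => ([:: [::]], [::])
  | Add t1 t2 => let: (P1, N1) := expand t1 in let: (P2, N2) := expand t2 in
                 (P1 ++ P2, N1 ++ N2)
  | Opp t1 => let: (P1, N1) := expand t1 in (N1, P1)
  | Mul t1 t2 => let: (P1, N1) := expand t1 in let: (P2, N2) := expand t2 in
      ([seq w1 ++ w2 | w1 <- P1, w2 <- P2] ++ [seq w1 ++ w2 | w1 <- N1, w2 <- N2],
       [seq w1 ++ w2 | w1 <- P1, w2 <- N2] ++ [seq w1 ++ w2 | w1 <- N1, w2 <- P2])
  end.

Fixpoint squash (w : word) : word :=
  match w with
  | a :: ((b :: _) as w') => if (a == b) && is_idem a then squash w' else a :: squash w'
  | _ => w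
  end.

Definition normal_word (w : word) : word :=
  squash (filter (predC is_cent) w) ++ filter is_cent w.

Definition nc_equal (t1 t2 : term) : bool :=
  let: (P1, N1) := expand t1 in let: (P2, N2) := expand t2 in
  perm_eq (map normal_word (P1 ++ N2)) (map normal_word (P2 ++ N1)).

Section NoncommutativeNormalization.
Variable R : pzRingType.

Fixpoint all_idem (xs : seq R) : Prop :=
  if xs is x :: xs' then x * x = x /\ all_idem xs' else True.

Fixpoint comm_with (c : R) (xs : seq R) : Prop :=
  if xs is x :: xs' then c * x = x * c /\ comm_with c xs' else True.

Fixpoint all_comm (cs xs : seq R) : Prop :=
  if cs is c :: cs' then comm_with c xs /\ all_comm cs' xs else True.

Lemma all_idemP xs : all_idem xs -> forall i, nth 0 xs i * nth 0 xs i = nth 0 xs i.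
Proof.
elim: xs => [_ i|x xs IHxs [xx /IHxs xsP] [|i] //=].
by rewrite nth_nil mul0r.
Qed.

Lemma all_commP cs xs : all_comm cs xs -> forall i j, GRing.comm (nth 0 cs i) (nth 0 xs j).
Proof.
have comm_withP c ys : comm_with c ys -> forall j, GRing.comm c (nth 0 ys j).
  elim: ys => [_ j|y ys IHys [cy /IHys ysP] [|j] //=].
  by rewrite nth_nil; apply: commr0.
elim: cs => [_ i j|c cs IHcs [/comm_withP cP /IHcs csP] [|i] j //=].
by rewrite nth_nil; apply/esym/commr0.
Qed.

Variables (idems cents frees : seq R).

Definition letter_val (a : letter) : R :=
  match a with Idem i => nth 0 idems i | Cent i => nth 0 cents i | Free i => nth 0 frees i end.

Fixpoint term_val (t : term) : R :=
  match t with
  | Atom a => letter_val a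
  | Zero => 0
  | One => 1
  | Add t1 t2 => term_val t1 + term_val t2
  | Opp t1 => - term_val t1
  | Mul t1 t2 => term_val t1 * term_val t2
  end.

Definition word_val (w : word) : R := \prod_(a <- w) letter_val a.

Lemma word_val_cons a w : word_val (a :: w) = letter_val a * word_val w.
Proof. exact: big_cons. Qed.

Lemma word_val_cat w1 w2 : word_val (w1 ++ w2) = word_val w1 * word_val w2.
Proof. exact: big_cat. Qed.

Definition words_val (ws : seq word) : R := \sum_(w <- ws) word_val w.

Lemma words_val_cat ws1 ws2 : words_val (ws1 ++ ws2) = words_val ws1 + words_val ws2.
Proof. exact: big_cat. Qed.

Lemma words_val_mul ws1 ws2 :
  words_val [seq w1 ++ w2 | w1 <- ws1, w2 <- ws2] = words_val ws1 * words_val ws2.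
Proof.
rewrite /words_val big_allpairs_dep mulr_suml; apply: eq_bigr => w1 _.
by rewrite mulr_sumr; apply: eq_bigr => w2 _; apply: word_val_cat.
Qed.

Lemma expand_sound t : term_val t = words_val (expand t).1 - words_val (expand t).2.
Proof.
elim: t => [a| | |t1 IH1 t2 IH2|t1 IH1|t1 IH1 t2 IH2] /=.
- by rewrite /words_val /word_val big_seq1 big_nil big_seq1 subr0.
- by rewrite /words_val !big_nil subr0.
- by rewrite /words_val /word_val big_seq1 big_nil big_nil subr0.
- case: (expand t1) IH1 => P1 N1 ->; case: (expand t2) IH2 => P2 N2 -> /=.
  by rewrite !words_val_cat opprD addrACA.
- by case: (expand t1) IH1 => P1 N1 -> /=; rewrite opprB.
- case: (expand t1) IH1 => P1 N1 ->; case: (expand t2) IH2 => P2 N2 -> /=.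
  rewrite !words_val_cat !words_val_mul mulrBl !mulrBr opprB opprD !addrA.
  by congr (_ + _); rewrite addrAC.
Qed.

Hypothesis idemsP : all_idem idems.
Hypothesis cents_idemsP : all_comm cents idems.
Hypothesis cents_freesP : all_comm cents frees.

Lemma squash_sound w : word_val (squash w) = word_val w.
Proof.
elim: w => [|a [|b w] IHw] //=; case: ifP => [/andP[/eqP eab] | _].
- rewrite IHw -{}eab; case: a => // i _.
  by rewrite !word_val_cons mulrA /= (all_idemP idemsP).
- by rewrite word_val_cons [RHS]word_val_cons IHw.
Qed.

Lemma normal_word_sound w : word_val (normal_word w) = word_val w.
Proof.
rewrite /normal_word word_val_cat squash_sound.
elim: w => [|a w IHw] /=; first by rewrite /word_val big_nil mulr1.
case: a => i /=; rewrite !word_val_cons -?IHw ?mulrA //.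
congr (_ * _); symmetry; rewrite /word_val big_filter.
apply: commr_prod => -[j|j|j] //= _.
- exact: (all_commP cents_idemsP).
- exact: (all_commP cents_freesP).
Qed.

Lemma nc_equal_sound t1 t2 : nc_equal t1 t2 -> term_val t1 = term_val t2.
Proof.
rewrite /nc_equal !expand_sound; case: (expand t1) => P1 N1; case: (expand t2) => P2 N2 /=.
move=> perm_normal.
have normal_words ws : words_val (map normal_word ws) = words_val ws.
  by rewrite /words_val big_map; apply: eq_bigr => w _; apply: normal_word_sound.
have : words_val (map normal_word (P1 ++ N2)) = words_val (map normal_word (P2 ++ N1)).
  exact: perm_big.
rewrite !normal_words !words_val_cat => eqPN.
by apply/eqP; rewrite subr_eq addrAC -eqPN addrK.
Qed.

End NoncommutativeNormalization.

Arguments term_val {R} idems cents frees t.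

Ltac list_index x xs :=
  lazymatch xs with
  | x :: _ => constr:(0%N)
  | _ :: ?xs' => let n := list_index x xs' in constr:(n.+1)
  end.

Ltac list_snoc xs x :=
  lazymatch xs with
  | nil => constr:(x :: nil)
  | ?y :: ?xs' => let ys := list_snoc xs' x in constr:(y :: ys)
  end.

Ltac reify_term idems cents frees t :=
  lazymatch t with
  | ?a + ?b =>
      lazymatch reify_term idems cents frees a with (?ea, ?frees1) =>
      lazymatch reify_term idems cents frees1 b with (?eb, ?frees2) =>
        constr:((Add ea eb, frees2)) end end
  | - ?a =>
      lazymatch reify_term idems cents frees a with (?ea, ?frees1) =>
        constr:((Opp ea, frees1)) end
  | ?a * ?b =>
      lazymatch reify_term idems cents frees a with (?ea, ?frees1) =>
      lazymatch reify_term idems cents frees1 b with (?eb, ?frees2) =>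
        constr:((Mul ea eb, frees2)) end end
  | 0 => constr:((Zero, frees))
  | 1 => constr:((One, frees))
  | _ =>
      match constr:(tt) with
      | _ => let n := list_index t idems in constr:((Atom (Idem n), frees))
      | _ => let n := list_index t cents in constr:((Atom (Cent n), frees))
      | _ => let n := list_index t frees in constr:((Atom (Free n), frees))
      | _ => let frees' := list_snoc frees t in
             let n := list_index t frees' in constr:((Atom (Free n), frees'))
      end
  end.

Ltac ncring_core idems cents :=
  lazymatch goal with |- @eq ?T ?l ?r =>
  lazymatch reify_term idems cents (@nil T) l with (?el, ?frees1) =>
  lazymatch reify_term idems cents frees1 r with (?er, ?frees) =>
    change (term_val idems cents frees el = term_val idems cents frees er);
    apply: nc_equal_sound;
    [ cbn [all_idem all_comm comm_with];
      repeat split; first [assumption | symmetry; assumption] ..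
    | vm_compute; reflexivity ]
  end end end.

(* [ncring idems commuting cents] proves a ring identity in which the elements of
   [idems] are idempotent and those of [cents] commute with every atom outside
   [cents]. It
   moves the [cents] to the right and collapses squares of [idems]; this decides
   only such normal-form coincidences, not the full equational theory. *)
Tactic Notation "ncring" uconstr(idems) "commuting" uconstr(cents) :=
  lazymatch goal with |- @eq ?T _ _ =>
    let idems := constr:(idems : seq T) in
    let cents := constr:(cents : seq T) in
    ncring_core idems cents
  end.
Tactic Notation "ncring" uconstr(idems) := ncring idems commuting [::].

(** * Moore-Penrose inverses in rings with involution *)

Section Involution.
Variables (R : pzRingType) (star : R -> R).
Hypothesis starI : is_involution star.

Lemma starK : involutive star. Proof. by case: starI. Qed.

Lemma starD a b : star (a + b) = star a + star b. Proof. by case: starI. Qed.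

Lemma starM a b : star (a * b) = star b * star a. Proof. by case: starI. Qed.

Lemma star0 : star 0 = 0.
Proof. by apply: (addrI (star 0)); rewrite -starD !addr0. Qed.

Lemma starN a : star (- a) = - star a.
Proof. by apply: (addrI (star a)); rewrite -starD !subrr star0. Qed.

Lemma starB a b : star (a - b) = star a - star b.
Proof. by rewrite starD starN. Qed.

Lemma star1 : star 1 = 1.
Proof. by have := starM 1 (star 1); rewrite mul1r !starK mul1r. Qed.

Lemma projection_compl p : projection star p -> projection star (1 - p).
Proof.
case=> pp sp; split; last by rewrite starB star1 sp.
by ncring [:: p].
Qed.

Lemma is_MP_uniq a b c : is_MP star a b -> is_MP star a c -> b = c.
Proof.
case=> b1 b2 b3 b4 [c1 c2 c3 c4].
have ab_eq : a * b = a * b * (a * c).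
  by rewrite -{1}b3 -{1}c1 -(mulrA (a * c)) starM b3 c3.
have ca_eq : c * a = b * a * (c * a).
  by rewrite -{1}c4 -{1}b1 !mulrA -(mulrA (c * a)) starM c4 b4 !mulrA.
have abc : b = b * a * c by rewrite -{1}b2 -mulrA ab_eq !mulrA b2.
have bac : c = b * a * c by rewrite -{1}c2 ca_eq -mulrA c2.
by rewrite {1}abc -bac.
Qed.

Lemma mpinvE a b : is_MP star a b -> mpinv star a = b.
Proof.
move=> abMP; apply/esym; apply: (is_MP_uniq abMP).
by apply: epsilon_spec; exists b.
Qed.

Lemma mpinvP a : MP_invertible star a -> is_MP star a (mpinv star a).
Proof. by case=> b abMP; rewrite (mpinvE abMP). Qed.

Lemma is_MP_star a b : is_MP star a b -> is_MP star (star a) (star b).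
Proof.
by case=> b1 b2 b3 b4; split; rewrite -!starM ?starK ?mulrA ?b1 ?b2 ?b3 ?b4.
Qed.

Lemma mpinv_star a : MP_invertible star a -> mpinv star (star a) = star (mpinv star a).
Proof. by move/mpinvP/is_MP_star/mpinvE. Qed.

Lemma is_MP_selfadjoint a b : star a = a -> is_MP star a b -> star b = b.
Proof.
move=> sa abMP; apply: (is_MP_uniq _ abMP).
by rewrite -{1}sa; apply: is_MP_star.
Qed.

Lemma is_MP_comm a b x :
  star a = a -> star x = x -> x * a = a * x -> is_MP star a b -> x * b = b * x.
Proof.
move=> sa sx xa abMP; have sb := is_MP_selfadjoint sa abMP; case: abMP => b1 b2 b3 _.
have ab_ba : a * b = b * a by rewrite -b3 starM sa sb.
have xe : x * (a * b) = a * b * x * (a * b).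
  by rewrite !mulrA -(mulrA (a * b) x a) xa mulrA b1.
have ex : a * b * x = a * b * x * (a * b).
  by have := congr1 star xe; rewrite !starM sx sa sb -ab_ba !mulrA.
have e_comm : x * (a * b) = a * b * x by rewrite xe -ex.
rewrite -{1}b2 -ab_ba mulrA e_comm ab_ba -(mulrA b a) -xa !mulrA.
by rewrite -(mulrA (b * x)) -mulrA e_comm !mulrA b2.
Qed.

Lemma is_MP_mul_star a b : is_MP star a b -> is_MP star (a * star a) (star b * b).
Proof.
case=> b1 b2 b3 b4.
have aa_bb : a * star a * (star b * b) = a * b.
  by rewrite mulrA -(mulrA a) -starM b4 !mulrA b1.
have bb_aa : star b * b * (a * star a) = a * b.
  by have := congr1 star aa_bb; rewrite b3 !starM !starK.
split; first by rewrite aa_bb mulrA b1.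
- by rewrite -mulrA aa_bb mulrA -!(mulrA (star b)) b2.
- by rewrite aa_bb b3.
- by rewrite bb_aa b3.
Qed.

Lemma is_MP_of_14_13 a x z :
  a * x * a = a -> star (x * a) = x * a -> a * z * a = a -> star (a * z) = a * z ->
  is_MP star a (x * a * z).
Proof.
move=> x1 x4 z1 z3.
have x1r t : a * (x * (a * t)) = a * t by rewrite !mulrA x1.
have z1r t : a * (z * (a * t)) = a * t by rewrite !mulrA z1.
split.
- by rewrite !mulrA x1 z1.
- by rewrite -!mulrA z1r x1r.
- by rewrite !mulrA x1 z3.
- by rewrite -!mulrA (mulrA a z) z1 x4.
Qed.

Section ProjectionCompression.
Variables (P a : R).
Hypotheses (PP : P * P = P) (sP : star P = P) (sa : star a = a) (Pa : P * a = a * P).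

Lemma is_MP_compress y : is_MP star a y -> is_MP star (P * a) (P * y).
Proof.
move=> ayMP; have Py := is_MP_comm sa sP Pa ayMP; case: ayMP => y1 y2 y3 y4.
split.
- by rewrite -[in RHS]y1; ncring [:: P] commuting [:: a; y].
- by rewrite -[in RHS]y2; ncring [:: P] commuting [:: a; y].
- have -> : P * a * (P * y) = P * (a * y) by ncring [:: P] commuting [:: a; y].
  by rewrite starM y3 sP; ncring [:: P] commuting [:: a; y].
- have -> : P * y * (P * a) = P * (y * a) by ncring [:: P] commuting [:: a; y].
  by rewrite starM y4 sP; ncring [:: P] commuting [:: a; y].
Qed.

Lemma is_MP_split v w :
  is_MP star (P * a) v -> is_MP star ((1 - P) * a) w -> is_MP star a (v + w).
Proof.
move=> vMP wMP.
have sP' : star (1 - P) = 1 - P by rewrite starB star1 sP.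
have sPa : star (P * a) = P * a by rewrite starM sa sP Pa.
have sPa' : star ((1 - P) * a) = (1 - P) * a.
  by rewrite starM sa sP'; ncring [:: P] commuting [:: a].
have Pv : P * v = v * P.
  by apply: (is_MP_comm sPa sP _ vMP); ncring [:: P] commuting [:: a].
have Pw : P * w = w * P.
  by apply: (is_MP_comm sPa' sP _ wMP); ncring [:: P] commuting [:: a].
case: vMP wMP => v1 v2 v3 v4 [w1 w2 w3 w4].
have vP : v = P * v by rewrite -v2; ncring [:: P] commuting [:: a; v].
have wP : w = (1 - P) * w by rewrite -w2; ncring [:: P] commuting [:: a; w].
have aL : a * (v + w) = P * a * v + (1 - P) * a * w.
  by rewrite {1}vP {1}wP; ncring [:: P] commuting [:: a; v; w].
have aR : (v + w) * a = v * (P * a) + w * ((1 - P) * a).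
  by rewrite {1}vP {1}wP; ncring [:: P] commuting [:: a; v; w].
split; last 2 first.
- by rewrite aL starD v3 w3.
- by rewrite aR starD v4 w4.
- transitivity (P * a * v * (P * a) + (1 - P) * a * w * ((1 - P) * a)).
    by rewrite vP wP; ncring [:: P] commuting [:: a; v; w].
  by rewrite v1 w1; ncring [:: P] commuting [:: a].
- transitivity (v * (P * a) * v + w * ((1 - P) * a) * w); last by rewrite v2 w2.
  by rewrite vP wP; ncring [:: P] commuting [:: a; v; w].
Qed.

End ProjectionCompression.

(** * Pairs of projections *)

(* [sqdiff p q = (p - q) ^+ 2] when [p] and [q] are idempotent. *)
Definition sqdiff (p q : R) : R := p + q - p * q - q * p.

Lemma sqdiffC p q : sqdiff q p = sqdiff p q.
Proof. by rewrite /sqdiff; ncring [::]. Qed.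

Lemma sqdiff_compl p q : sqdiff (1 - p) (1 - q) = sqdiff p q.
Proof. by rewrite /sqdiff; ncring [::]. Qed.

Section StarReducing.
Hypothesis starR : star_reducing star.

Lemma is_MP_of_mul_star a z : is_MP star (a * star a) z -> is_MP star a (star a * z).
Proof.
move=> zMP; have sz : star z = z.
  by apply: is_MP_selfadjoint zMP; rewrite starM starK.
case: zMP => z1 z2 z3 _.
have sd : star (a * star a * z * a - a) = star a * z * (a * star a) - star a.
  by rewrite starB !starM starK sz !mulrA.
have za : a * star a * z * a = a.
  apply/eqP; rewrite -subr_eq0; apply/eqP; rewrite -[LHS]starK.
  suff -> : star (a * star a * z * a - a) = 0 by rewrite star0.
  apply: starR; rewrite starK sd.
  transitivity (a * star a * z * (a * star a) * z * (a * star a)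
    - a * star a * z * (a * star a) - a * star a * z * (a * star a) + a * star a).
    by ncring [::].
  by rewrite !z1 subrr sub0r addNr.
split.
- by rewrite mulrA za.
- by rewrite -!mulrA (mulrA a) (mulrA z) z2.
- by rewrite mulrA z3.
- by rewrite !starM starK sz mulrA.
Qed.


Section Intertwining.
Variables A B x v P : R.
Hypotheses (sA : star A = A) (sB : star B = B) (sP : star P = P).
Hypotheses (xsx : star x * x = A - A * A) (xxs : x * star x = B - B * B).
Hypotheses (Bx : B * x = x * A) (BP : B * P = B) (vMP : is_MP star A v).

Lemma intertwined_absorb : x * v * A = x.
Proof.
have sv := is_MP_selfadjoint sA vMP; case: vMP => v1 _ v3 _.
have Av : A * v = v * A by rewrite -v3 starM sv sA.
suff x0 : x * (1 - v * A) = 0.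
  by move/eqP: x0; rewrite mulrBr mulr1 subr_eq0 mulrA => /eqP <-.
apply: starR; rewrite starM starB star1 starM sA sv Av.
transitivity ((1 - v * A) * (A - A * v * A - A * (A - A * v * A))).
  by rewrite !mulrA -(mulrA _ (star x) x) xsx; ncring [::].
by rewrite v1 subrr mulr0 subrr mulr0.
Qed.

Lemma is_MP_intertwined :
  let m := P + x * v * v * star x in is_MP star B (m * B * m).
Proof.
move=> m; pose E := B + x * v * star x.
have xvA := intertwined_absorb.
have sv := is_MP_selfadjoint sA vMP; case: vMP => _ v2 v3 _.
have Av : A * v = v * A by rewrite -v3 starM sv sA.
have xsB : star x * B = A * star x by rewrite -sB -sA -!starM Bx.
have sm : star m = m by rewrite starD sP !starM starK sv !mulrA.
have sE : star E = E by rewrite starD sB !starM starK sv !mulrA.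
have Bm : B * m = E.
  rewrite mulrDr BP; congr (_ + _).
  by rewrite !mulrA Bx -(mulrA x A v) Av !mulrA -(mulrA x v A) -(mulrA x) v2.
have EB : E * B = B.
  by rewrite mulrDl -!mulrA xsB !mulrA xvA xxs addrC subrK.
have mB : m * B = E by rewrite -sE -Bm starM sB sm.
have EE : E * E = E by rewrite -{2}Bm mulrA EB Bm.
split.
- by rewrite !mulrA Bm EB Bm EB.
- have -> : m * B * m * B * (m * B * m) = m * (B * m * (B * m * (B * m))).
    by rewrite !mulrA.
  by rewrite Bm !EE -mulrA Bm.
- by rewrite !mulrA Bm EB Bm sE.
- by rewrite mB -mulrA mB EE sE.
Qed.

End Intertwining.

Section ProjectionPair.
Variables p q : R.
Hypotheses (pP : projection star p) (qP : projection star q).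

Let pp : p * p = p := proj1 pP.
Let qq : q * q = q := proj1 qP.
Let sp : star p = p := proj2 pP.
Let sq : star q = q := proj2 qP.
Let sp' : star (1 - p) = 1 - p := proj2 (projection_compl pP).

Lemma sqdiff_selfadjoint : star (sqdiff p q) = sqdiff p q.
Proof. by rewrite /sqdiff !starB starD !starM sp sq; ncring [:: p; q]. Qed.

Lemma MP_invertible_compl_corner :
  MP_invertible star (p - p * q * p) -> MP_invertible star ((1 - p) * q * (1 - p)).
Proof.
case=> v vMP; eexists.
apply: (is_MP_intertwined (x := (1 - p) * q * p) _ _ sp' _ _ _ _ vMP).
- by rewrite starB !starM sp sq mulrA.
- by rewrite !starM sp' sq mulrA.
- by rewrite !starM sp' sq sp; ncring [:: p; q].
- by rewrite !starM sp' sq sp; ncring [:: p; q].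
- by ncring [:: p; q].
- by ncring [:: p; q].
Qed.

Lemma MP_invertible_corner_of_one_sub y :
  is_MP star (1 - p * q) y -> MP_invertible star (p - p * q * p).
Proof.
case=> y1 _ _ y4.
pose g := y * (1 - p * q).
have gy : (1 - p * q) * g = 1 - p * q by rewrite mulrA y1.
have sg : star g = g := y4.
have p'g : (1 - p) * (1 - g) = 0.
  transitivity ((1 - p) * ((1 - p * q) - (1 - p * q) * g)).
    by rewrite /g; ncring [:: p; q].
  by rewrite gy subrr mulr0.
have pg : p * g = g * p.
  have p_g : p * (1 - g) = 1 - g.
    by apply/eqP; rewrite -subr_eq0 -{2}[1 - g]mul1r -mulrBl -opprB mulNr p'g oppr0.
  have g_p : (1 - g) * p = 1 - g.
    by rewrite -[LHS]starK starM sp starB star1 sg p_g starB star1 sg.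
  transitivity (p - p * (1 - g)); first by ncring [::].
  by rewrite p_g -{1}g_p; ncring [::].
pose x := p * y * p.
have AE : p - p * q * p = (1 - p * q) * p by ncring [:: p; q].
have sA : star (p - p * q * p) = p - p * q * p by rewrite starB !starM sp sq mulrA.
have xA : x * (p - p * q * p) = p * g.
  transitivity (p * g * p); first by rewrite /x /g; ncring [:: p; q].
  by rewrite -mulrA -pg mulrA pp.
have AxA : (p - p * q * p) * x * (p - p * q * p) = p - p * q * p.
  by rewrite -mulrA xA {1}AE -(mulrA (1 - p * q)) (mulrA p p) pp pg mulrA gy -AE.
exists (x * (p - p * q * p) * star x); apply: is_MP_of_14_13 => //.
- by rewrite xA starM sg sp pg.
- by rewrite -{1 2}sA -!starM mulrA AxA sA.
- by rewrite -{1 2}sA -starM starK xA starM sg sp pg.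
Qed.

Lemma MP_invertible_sqdiff_of_corner :
  MP_invertible star (p - p * q * p) -> MP_invertible star (sqdiff p q).
Proof.
move=> Minv; have [[v vMP] [w wMP]] := (Minv, MP_invertible_compl_corner Minv).
exists (v + w); apply: (is_MP_split pp sp sqdiff_selfadjoint).
- by rewrite /sqdiff; ncring [:: p; q].
- by rewrite (_ : p * _ = p - p * q * p) // /sqdiff; ncring [:: p; q].
- by rewrite (_ : (1 - p) * _ = (1 - p) * q * (1 - p)) // /sqdiff; ncring [:: p; q].
Qed.

Lemma MP_invertible_sqdiff_mul_compl :
  MP_invertible star (p * (1 - q)) -> MP_invertible star (sqdiff p q).
Proof.
case=> b /is_MP_mul_star; rewrite starM sp starB star1 sq => bMP.
apply: MP_invertible_sqdiff_of_corner => //; exists (star b * b).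
by rewrite (_ : _ - _ = p * (1 - q) * ((1 - q) * p)) //; ncring [:: p; q].
Qed.

Lemma MP_invertible_sqdiff_compl_mul :
  MP_invertible star ((1 - q) * p) -> MP_invertible star (sqdiff p q).
Proof.
case=> b /is_MP_star; rewrite starM sp starB star1 sq => bMP.
by apply: MP_invertible_sqdiff_mul_compl; exists (star b).
Qed.

Lemma MP_invertible_sqdiff_one_sub_pq :
  MP_invertible star (1 - p * q) -> MP_invertible star (sqdiff p q).
Proof.
case=> y /MP_invertible_corner_of_one_sub.
exact: MP_invertible_sqdiff_of_corner.
Qed.

Lemma MP_invertible_sqdiff_one_sub_qp :
  MP_invertible star (1 - q * p) -> MP_invertible star (sqdiff p q).
Proof.
case=> y /is_MP_star; rewrite starB star1 starM sp sq => yMP.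
by apply: MP_invertible_sqdiff_one_sub_pq; exists (star y).
Qed.

Lemma MP_invertible_sqdiff_one_sub_pqp :
  MP_invertible star (1 - p * q * p) -> MP_invertible star (sqdiff p q).
Proof.
case=> y yMP; apply: MP_invertible_sqdiff_of_corner => //; exists (p * y).
rewrite (_ : _ - _ = p * (1 - p * q * p)); last by ncring [:: p; q].
apply: is_MP_compress => //; last by ncring [:: p; q].
by rewrite starB star1 !starM sp sq mulrA.
Qed.

Lemma MP_invertible_sqdiff_sub :
  MP_invertible star (p - q) -> MP_invertible star (sqdiff p q).
Proof.
case=> b /is_MP_mul_star; rewrite starB sp sq => bMP.
exists (star b * b); rewrite (_ : sqdiff _ _ = (p - q) * (p - q)) //.
by rewrite /sqdiff; ncring [:: p; q].
Qed.

End ProjectionPair.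

Lemma MP_invertible_sqdiff p q :
  projection star p -> projection star q ->
  (exists2 x,
     x \in [:: 1 - p * q; 1 - p * q * p; p - p * q * p; p - p * q; p - q * p;
               1 - q * p; 1 - q * p * q; q - q * p * q; q - q * p; q - p * q;
               p + q - p * q; p + (1 - p) * q * (1 - p); (1 - p) * q * (1 - p);
               p + q - q * p; q + (1 - q) * p * (1 - q); (1 - q) * p * (1 - q);
               p * (1 - q); p - q; (1 - p) * q]
     & MP_invertible star x) ->
  MP_invertible star (sqdiff p q).
Proof.
move=> pP qP [x]; have pP' := projection_compl pP; have qP' := projection_compl qP.
have [[pp _] [qq _]] := (pP, qP).
have Meq y z : y = z -> MP_invertible star y -> MP_invertible star z by move->.
rewrite !inE; do ![case/orP=> [/eqP-> | ]]; last move/eqP->; move=> Mx.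
- exact: MP_invertible_sqdiff_one_sub_pq pP qP Mx.
- exact: MP_invertible_sqdiff_one_sub_pqp pP qP Mx.
- exact: MP_invertible_sqdiff_of_corner pP qP Mx.
- apply: MP_invertible_sqdiff_mul_compl pP qP _.
  by apply: (Meq _ _ _ Mx); ncring [:: p; q].
- apply: MP_invertible_sqdiff_compl_mul pP qP _.
  by apply: (Meq _ _ _ Mx); ncring [:: p; q].
- exact: MP_invertible_sqdiff_one_sub_qp pP qP Mx.
- by rewrite -sqdiffC; apply: MP_invertible_sqdiff_one_sub_pqp qP pP Mx.
- by rewrite -sqdiffC; apply: MP_invertible_sqdiff_of_corner qP pP Mx.
- rewrite -sqdiffC; apply: MP_invertible_sqdiff_mul_compl qP pP _.
  by apply: (Meq _ _ _ Mx); ncring [:: p; q].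
- rewrite -sqdiffC; apply: MP_invertible_sqdiff_compl_mul qP pP _.
  by apply: (Meq _ _ _ Mx); ncring [:: p; q].
- rewrite -sqdiff_compl; apply: MP_invertible_sqdiff_one_sub_pq pP' qP' _.
  by apply: (Meq _ _ _ Mx); ncring [:: p; q].
- rewrite -sqdiff_compl; apply: MP_invertible_sqdiff_one_sub_pqp pP' qP' _.
  by apply: (Meq _ _ _ Mx); ncring [:: p; q].
- rewrite -sqdiff_compl; apply: MP_invertible_sqdiff_of_corner pP' qP' _.
  by apply: (Meq _ _ _ Mx); ncring [:: p; q].
- rewrite -sqdiff_compl; apply: MP_invertible_sqdiff_one_sub_qp pP' qP' _.
  by apply: (Meq _ _ _ Mx); ncring [:: p; q].
- rewrite -sqdiff_compl -sqdiffC; apply: MP_invertible_sqdiff_one_sub_pqp qP' pP' _.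
  by apply: (Meq _ _ _ Mx); ncring [:: p; q].
- rewrite -sqdiff_compl -sqdiffC; apply: MP_invertible_sqdiff_of_corner qP' pP' _.
  by apply: (Meq _ _ _ Mx); ncring [:: p; q].
- exact: MP_invertible_sqdiff_mul_compl pP qP Mx.
- exact: MP_invertible_sqdiff_sub pP qP Mx.
- by rewrite -sqdiffC; apply: MP_invertible_sqdiff_compl_mul qP pP Mx.
Qed.

Section SqdiffInverse.
Variables p q u : R.
Hypotheses (pP : projection star p) (qP : projection star q).
Hypothesis uMP : is_MP star (sqdiff p q) u.

Let pp : p * p = p := proj1 pP.
Let qq : q * q = q := proj1 qP.
Let sp : star p = p := proj2 pP.
Let sq : star q = q := proj2 qP.
Let sk : star (sqdiff p q) = sqdiff p q := sqdiff_selfadjoint pP qP.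

Lemma sqdiff_inv_selfadjoint : star u = u.
Proof. exact: is_MP_selfadjoint sk uMP. Qed.

Lemma sqdiff_inv_commp : u * p = p * u.
Proof. by apply/esym/(is_MP_comm sk sp _ uMP); rewrite /sqdiff; ncring [:: p; q]. Qed.

Lemma sqdiff_inv_commq : u * q = q * u.
Proof. by apply/esym/(is_MP_comm sk sq _ uMP); rewrite /sqdiff; ncring [:: p; q]. Qed.

Let up := sqdiff_inv_commp.
Let uq := sqdiff_inv_commq.

Lemma mpinv_corner : mpinv star (p * (1 - q) * p) = p * u.
Proof.
apply: mpinvE; rewrite (_ : p * _ * p = p * sqdiff p q).
  by apply: is_MP_compress => //; rewrite /sqdiff; ncring [:: p; q].
by rewrite /sqdiff; ncring [:: p; q].
Qed.

Lemma mpinv_mul_compl : mpinv star (p * (1 - q)) = (1 - q) * p * u.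
Proof.
apply: mpinvE; have sq' : star (1 - q) = 1 - q by rewrite starB star1 sq.
rewrite (_ : _ * u = star (p * (1 - q)) * (p * u)); last first.
  by rewrite starM sp sq'; ncring [:: p].
apply: is_MP_of_mul_star; rewrite starM sp sq'.
rewrite (_ : p * (1 - q) * ((1 - q) * p) = p * sqdiff p q); last first.
  by rewrite /sqdiff; ncring [:: p; q].
by apply: is_MP_compress => //; rewrite /sqdiff; ncring [:: p; q].
Qed.

Lemma mpinv_compl_mul : mpinv star ((1 - q) * p) = p * (1 - q) * u.
Proof.
have [qq' sq'] := projection_compl qP.
apply: mpinvE; rewrite (_ : _ * u = star ((1 - q) * p) * ((1 - q) * u)); last first.
  by rewrite starM sp sq'; ncring [:: p; q].
apply: is_MP_of_mul_star; rewrite starM sp sq'.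
rewrite (_ : (1 - q) * p * (p * (1 - q)) = (1 - q) * sqdiff p q); last first.
  by rewrite /sqdiff; ncring [:: p; q].
by apply: is_MP_compress => //; rewrite /sqdiff; ncring [:: p; q].
Qed.

Lemma mpinv_sub : mpinv star (p - q) = (p - q) * u.
Proof.
apply: mpinvE; have sd : star (p - q) = p - q by rewrite starB sp sq.
rewrite -{2}sd; apply: is_MP_of_mul_star; rewrite sd.
by rewrite (_ : (p - q) * (p - q) = sqdiff p q) // /sqdiff; ncring [:: p; q].
Qed.

Let k := sqdiff p q.
Let e := k * u.

Let se : star e = e. Proof. by case: uMP. Qed.
Let ee : e * e = e. Proof. by case: uMP => u1 _ _ _; rewrite /e /k mulrA u1. Qed.
Let eu : e * u = u.
Proof.
case: uMP => _ u2 _ _; rewrite /e -[in RHS]u2 /k /sqdiff.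
by ncring [:: p; q] commuting [:: u].
Qed.

Let ke : k * e = k.
Proof.
case: uMP => u1 _ _ _; rewrite /e /k -[in RHS]u1 /sqdiff.
by ncring [:: p; q] commuting [:: u].
Qed.

Let e_commp : e * p = p * e.
Proof. by rewrite /e /k /sqdiff; ncring [:: p; q] commuting [:: u]. Qed.

Let e_commq : e * q = q * e.
Proof. by rewrite /e /k /sqdiff; ncring [:: p; q] commuting [:: u]. Qed.

Let sqdiff_range_compl : q * (1 - e) = p * (1 - e).
Proof.
apply/eqP; rewrite eq_sym -subr_eq0 -mulrBl; apply/eqP/starR.
rewrite starM starB starB star1 se sp sq.
transitivity ((1 - e) * (k - k * e)); last by rewrite ke subrr mulr0.
by rewrite /k /sqdiff; ncring [:: p; q] commuting [:: e].
Qed.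

Let y := 1 - p * q + p * q * (u + e).
Let g := 1 - p * (1 - e).

Let sg : star g = g.
Proof. by rewrite /g starB star1 starM starB star1 se sp; ncring [:: p] commuting [:: e]. Qed.

Let one_sub_pq_y : (1 - p * q) * y = g.
Proof.
transitivity (1 - p * q - p * q * k + p * q * e + p * q * (k * e)).
  by rewrite /y /e /k /sqdiff; ncring [:: p; q] commuting [:: u; e].
rewrite ke; transitivity (1 - p * (q * (1 - e))); first by rewrite /k /sqdiff; ncring [:: p; q].
by rewrite sqdiff_range_compl /g; ncring [:: p; q].
Qed.

Let y_one_sub_pq : y * (1 - p * q) = g.
Proof. by rewrite -one_sub_pq_y /y; ncring [:: p; q] commuting [:: u; e]. Qed.

Let g_one_sub_pq : g * (1 - p * q) = 1 - p * q.
Proof.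
transitivity (1 - p * q - p * (1 - e) + p * (q * (1 - e))).
  by rewrite /g; ncring [:: p; q] commuting [:: e].
by rewrite sqdiff_range_compl; ncring [:: p; q].
Qed.

Let g_y : g * y = y.
Proof.
transitivity (y - p * (1 - e) + p * (q * (1 - e)) - p * (q * (1 - e)) * (u + e)).
  by rewrite /g /y; ncring [:: p; q] commuting [:: u; e].
rewrite sqdiff_range_compl.
transitivity (y - p * (u + e - e * u - e * e)); first by ncring [:: p].
by rewrite eu ee; ncring [::].
Qed.

Lemma is_MP_one_sub_pq : is_MP star (1 - p * q) y.
Proof.
split; first by rewrite one_sub_pq_y g_one_sub_pq.
- by rewrite y_one_sub_pq g_y.
- by rewrite one_sub_pq_y sg.
- by rewrite y_one_sub_pq sg.
Qed.

Lemma mpinv_one_sub_pq_corner :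
  mpinv star (1 - p * q) * (p * (1 - q) * p) = p * (1 - q) * p * u.
Proof.
rewrite (mpinvE is_MP_one_sub_pq).
transitivity (y * (1 - p * q) * p); first by ncring [:: p; q].
rewrite y_one_sub_pq /g; transitivity (p * e); first by ncring [:: p] commuting [:: e].
by rewrite /e /k /sqdiff; ncring [:: p; q] commuting [:: u].
Qed.

End SqdiffInverse.

Lemma mpinv_corner_chain p q :
  projection star p -> projection star q -> MP_invertible star (sqdiff p q) ->
  let dg := mpinv star in
  let qb := 1 - q in
  [/\ dg (1 - p * q) * (p * qb * p) = p * qb * dg (p * qb * p),
      p * qb * dg (p * qb * p) = p * qb * p * dg (1 - q * p),
      p * qb * p * dg (1 - q * p) = p * dg (p * qb),
      p * dg (p * qb) = dg (qb * p) * p &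
      dg (qb * p) * p = p * dg (p - q) * p].
Proof.
move=> pP qP [u uMP] dg qb; rewrite {}/dg {}/qb.
have [[pp sp] [qq sq]] := (pP, qP).
have up := sqdiff_inv_commp pP qP uMP; have uq := sqdiff_inv_commq pP qP uMP.
have corner_inv := mpinv_one_sub_pq_corner pP qP uMP.
have inv_corner : p * (1 - q) * p * mpinv star (1 - q * p) = u * (p * (1 - q) * p).
  have sX : star (p * (1 - q) * p) = p * (1 - q) * p by rewrite !starM starB star1 sp sq mulrA.
  rewrite -[1 - q * p](_ : star (1 - p * q) = _); last by rewrite starB star1 starM sp sq.
  rewrite mpinv_star; last exact: ex_intro _ _ (is_MP_one_sub_pq pP qP uMP).
  by rewrite -{1}sX -starM corner_inv starM sX (sqdiff_inv_selfadjoint pP qP uMP).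
rewrite corner_inv inv_corner (mpinv_corner pP qP uMP) (mpinv_mul_compl pP qP uMP).
rewrite (mpinv_compl_mul pP qP uMP) (mpinv_sub pP qP uMP).
by split; ncring [:: p; q] commuting [:: u].
Qed.

End StarReducing.
End Involution.

Theorem corollary2p9 (R : pzRingType) (star : R -> R) (p q : R)
  (Hinv : is_involution star) (Hred : star_reducing star)
  (Hp : projection star p) (Hq : projection star q)
  (Hsome : exists2 x,
     x \in [:: 1 - p * q; 1 - p * q * p; p - p * q * p; p - p * q; p - q * p;
               1 - q * p; 1 - q * p * q; q - q * p * q; q - q * p; q - p * q;
               p + q - p * q; p + (1 - p) * q * (1 - p); (1 - p) * q * (1 - p);
               p + q - q * p; q + (1 - q) * p * (1 - q); (1 - q) * p * (1 - q);
               p * (1 - q); p - q; (1 - p) * q]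
     & MP_invertible star x) :
  let dg := mpinv star in
  let pb := 1 - p in
  let qb := 1 - q in
  [/\ dg (1 - p * q) * (p * qb * p) = p * qb * dg (p * qb * p),
      p * qb * dg (p * qb * p) = p * qb * p * dg (1 - q * p),
      p * qb * p * dg (1 - q * p) = p * dg (p * qb),
      p * dg (p * qb) = dg (qb * p) * p &
      dg (qb * p) * p = p * dg (p - q) * p] /\
  (dg (p + pb * q) * (pb * q * pb) = dg (q + p * qb) * (pb * q * pb)
  /\ dg (q + p * qb) * (pb * q * pb) = pb * q * dg (pb * q * pb)
  /\ pb * q * dg (pb * q * pb) = pb * q * pb * dg (p + q * pb)
  /\ pb * q * pb * dg (p + q * pb) = pb * q * pb * dg (q + qb * p)
  /\ pb * q * pb * dg (q + qb * p) = pb * dg (pb * q)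
  /\ pb * dg (pb * q) = dg (q * pb) * pb
  /\ dg (q * pb) * pb = pb * dg (q - p) * pb).
Proof.
have k_inv := MP_invertible_sqdiff Hinv Hred Hp Hq Hsome.
move=> dg pb qb; rewrite {}/dg {}/pb {}/qb.
have := mpinv_corner_chain Hinv Hred (projection_compl Hinv Hp) (projection_compl Hinv Hq).
rewrite sqdiff_compl subKr => /(_ k_inv) [d1 d2 d3 d4 d5].
have e1 : 1 - (1 - p) * (1 - q) = p + (1 - p) * q by ncring [::].
have e2 : q + p * (1 - q) = p + (1 - p) * q by ncring [::].
have e3 : 1 - (1 - q) * (1 - p) = p + q * (1 - p) by ncring [::].
have e4 : q + (1 - q) * p = p + q * (1 - p) by ncring [::].
have e5 : 1 - p - (1 - q) = q - p by ncring [::].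
rewrite e1 e3 e5 in d1 d2 d3 d5; rewrite e2 e4.
by split; [exact: mpinv_corner_chain | do !split].
Qed.
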